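(* (i) For all positive integers $t$ and $d$ with $1\le d\le t$, setting $s=1+d/t$, \[ g(s,t)=1-\frac{d^2+d}{(t+d)(2d+1)}=\frac{t}{t+d}+\frac{d^2}{(t+d)(2d+1)}=\frac{s+1+1/d}{(2+1/d)s}. \] (ii) For every rational number $s$ with $1<s\le 2$, $g(s)=\frac{s+1}{2s}$. (iii) For every positive integer $t$, $g(2,t)=\frac{3t+1}{4t+2}$.
   Context: Let $\mathbb{F}$ be a finite field and $x_1,\dots,x_p$ a basis of $\mathbb{F}^p$. A $[t\times m,p]$ array code is a $t\times m$ array whose entries (cells) are linear combinations of $x_1,\dots,x_p$; its columns are called servers. It has the $k$-PIR property (is a $[t\times m,p]$ $k$-PIR array code) if for every $i\in\{1,\dots,p\}$ there exist $k$ pairwise disjoint sets $S_1,\dots,S_k$ of columns such that for every $j$ the vector $x_i$ lies in the linear span of all entries of the columns in $S_j$. Its PIR rate is $k/m$. For a rational $s>1$ and a positive integer $t$ with $st$ an integer, $g(s,t)$ is the largest PIR rate $k/m$ of a $[t\times m,st]$ $k$-PIR array code (over all finite fields, all $m$ and all $k$), and $g(s)=\limsup_{t\to\infty} g(s,t)$, with $t$ ranging over positive integers such that $st$ is an integer. *)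

From HB Require Import structures.
From mathcomp Require Import all_boot all_order all_algebra all_field.
From mathcomp Require Import boolp classical_sets reals.
Set Implicit Arguments. Unset Strict Implicit. Unset Printing Implicit Defensive.
Import Order.TTheory GRing.Theory Num.Theory.
Local Open Scope ring_scope.
Local Open Scope classical_set_scope.

(* A [t x m, p] array code over the finite field F: cell (r, c) holds a
   linear combination of x_1..x_p, encoded by its coefficient row vector
   in F^p (x_i is the i-th standard basis vector delta_mx 0 i). *)
Definition array_code (F : finFieldType) (t m p : nat) :=
  'I_t -> 'I_m -> 'rV[F]_p.

Definition in_span_cols (F : finFieldType) (t m p : nat)
    (C : array_code F t m p) (S : {set 'I_m}) (i : 'I_p) : Prop :=
  exists a : 'I_t -> 'I_m -> F,
    \sum_(r < t) \sum_(c in S) a r c *: C r c = delta_mx 0 i.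

Definition is_kPIR (F : finFieldType) (t m p : nat)
    (C : array_code F t m p) (k : nat) : Prop :=
  forall i : 'I_p, exists S : 'I_k -> {set 'I_m},
    (forall j j' : 'I_k, j != j' -> S j :&: S j' == finset.set0) /\
    (forall j : 'I_k, in_span_cols C (S j) i).

Definition PIR_rates (R : realType) (t p : nat) : set R :=
  [set r | exists (F : finFieldType) (m k : nat) (C : array_code F t m p),
     (0 < m)%N /\ is_kPIR C k /\ r = k%:R / m%:R].

Arguments PIR_rates R t p : clear implicits.

(* Rates of [t x m, st] k-PIR array codes; empty unless st is an integer. *)
Definition rates_st (R : realType) (s : rat) (t : nat) : set R :=
  [set r | exists p : nat, p%:Q = s * t%:Q /\ PIR_rates R t p r].

Arguments rates_st R s t : clear implicits.

Definition g_st (R : realType) (s : rat) (t : nat) : R := sup (rates_st R s t).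

Arguments g_st R s t : clear implicits.

(* g(s) = limsup_{t -> oo} g(s,t), t ranging over positive integers with
   st an integer:  inf_N sup { g(s,t) | t >= N, t > 0, st integer }. *)
Definition g_s (R : realType) (s : rat) : R :=
  inf [set u | exists N : nat,
        u = sup [set v | exists t : nat,
                   [/\ (N <= t)%N, (0 < t)%N,
                       (exists p : nat, p%:Q = s * t%:Q) & v = g_st R s t]]].
Arguments g_s R s : clear implicits.

From HB Require Import structures.
From mathcomp Require Import all_boot all_order all_algebra all_field.
From mathcomp Require Import boolp classical_sets reals.
From mathcomp Require Import perm zify ring lra.
Set Implicit Arguments. Unset Strict Implicit. Unset Printing Implicit Defensive.
Import Order.TTheory GRing.Theory Num.Theory.
Local Open Scope ring_scope.

(* Write p = t + d.  Lower bound: index servers by pairs W \subset U of subsets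
   of [1..p] with |U| = 2d and |W| in {d, d+1}; a server stores the unit vectors
   e_j for j outside W and, when |W| = d+1, also the sum of the e_j over W.
   Replacing W by U \ (W \ {i}) pairs each server with i in W and |W| = d with
   one that holds the sum, so e_i is recovered from disjoint singletons and
   pairs; by symmetry and double counting the servers left out for x_i form a
   fraction d(d+1)/((t+d)(2d+1)).
   Upper bound: give a server weight 2d+1 for x_i if it spans e_i, weight d if
   every coordinate its cells involve is spanned as a unit vector, and d+1
   otherwise.  Every recovery set weighs at least 2d+1, while a rank count
   bounds the total weight of a server by t(2d+1) + d^2.
   For (ii), g(s,t) = (s+1)/(2s) - (s-1)/(2s(2d+1)) with d = st - t. *)

Section ColumnSpan.
Variables (F : finFieldType) (X : finType) (t p : nat) (C : 'I_t -> X -> 'rV[F]_p).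

Definition in_span (S : {set X}) (v : 'rV[F]_p) :=
  exists a : 'I_t -> X -> F, \sum_(r < t) \sum_(x in S) a r x *: C r x = v.

Lemma in_span0 S : in_span S 0.
Proof.
by exists (fun _ _ => 0); apply: big1 => r _; apply: big1 => x _; rewrite scale0r.
Qed.

Lemma in_spanD S u v : in_span S u -> in_span S v -> in_span S (u + v).
Proof.
move=> [a <-] [b <-]; exists (fun r x => a r x + b r x).
rewrite -big_split; apply: eq_bigr => r _; rewrite -big_split.
by apply: eq_bigr => x _; rewrite scalerDl.
Qed.

Lemma in_spanZ S c v : in_span S v -> in_span S (c *: v).
Proof.
move=> [a <-]; exists (fun r x => c * a r x).
rewrite scaler_sumr; apply: eq_bigr => r _; rewrite scaler_sumr.
by apply: eq_bigr => x _; rewrite scalerA.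
Qed.

Lemma in_spanB S u v : in_span S u -> in_span S v -> in_span S (u - v).
Proof. by move=> Su Sv; apply: in_spanD Su _; rewrite -scaleN1r; apply: in_spanZ. Qed.

Lemma in_span_sum S (I : finType) (P : pred I) (v : I -> 'rV[F]_p) :
  (forall i, P i -> in_span S (v i)) -> in_span S (\sum_(i | P i) v i).
Proof. by move=> Sv; apply: big_ind => //; [apply: in_span0 | apply: in_spanD]. Qed.

Lemma in_span_cell (S : {set X}) r x : x \in S -> in_span S (C r x).
Proof.
move=> xS; exists (fun r' x' => ((r' == r) && (x' == x))%:R).
rewrite (bigD1 r) //= [Y in _ + Y]big1 => [|r' /negbTE r'r]; last first.
  by apply: big1 => x' _; rewrite r'r scale0r.
rewrite addr0 (bigD1 x) //= !eqxx scale1r big1 ?addr0 // => x' /andP[_ /negbTE ->].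
by rewrite andbF scale0r.
Qed.

Lemma kPIR_of_recovery_sets k :
  (forall i : 'I_p, exists (T : {set X}) (Rec : X -> {set X}),
     [/\ #|T| = k,
         {in T &, forall x y, x != y -> [disjoint Rec x & Rec y]} &
         {in T, forall x, in_span (Rec x) (delta_mx 0 i)}]) ->
  is_kPIR (fun r (c : 'I_#|X|) => C r (enum_val c)) k.
Proof.
move=> recover i; have [T [Rec [cardT disj spanT]]] := recover i.
pose g (j : 'I_k) : X := enum_val (cast_ord (esym cardT) j).
have gT j : g j \in T by exact: enum_valP.
have g_inj : injective g by move=> j j' /enum_val_inj/(congr1 val) /= e; exact: val_inj.
exists (fun j => [set c | enum_val c \in Rec (g j)]); split.
  move=> j j' jj'; apply/eqP/setP => c; rewrite !inE.
  have gjj' : g j != g j' by rewrite (inj_eq g_inj).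
  have /setP/(_ (enum_val c)) := disjoint_setI0 (disj _ _ (gT j) (gT j') gjj').
  by rewrite !inE.
move=> j; have [a span_i] := spanT _ (gT j).
exists (fun r c => a r (enum_val c)); rewrite -span_i; apply: eq_bigr => r _.
rewrite (reindex (@enum_val X predT)) /=; first by apply: eq_bigl => c; rewrite inE.
by exists (@enum_rank X) => x _; [exact: enum_valK | exact: enum_rankK].
Qed.

End ColumnSpan.

Lemma card_ord_lt p n : (n <= p)%N -> #|[set j : 'I_p | (j < n)%N]| = n.
Proof.
move=> le_np; have -> : [set j : 'I_p | (j < n)%N] = widen_ord le_np @: 'I_n.
  apply/setP => j; rewrite inE; apply/idP/imsetP => [lt_jn | [k _ ->]]; last exact: (ltn_ord k).
  by exists (Ordinal lt_jn); rewrite ?inE //; apply: val_inj.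
by rewrite card_imset ?card_ord // => k k' /(congr1 val) /= /val_inj.
Qed.

Section Construction.
Variables (F : finFieldType) (t d : nat).
Local Notation p := (t + d)%N.

Definition admissible (UW : {set 'I_p} * {set 'I_p}) :=
  [&& #|UW.1| == (2 * d)%N, UW.2 \subset UW.1 & #|UW.2| \in [:: d; d.+1]].

Local Notation server := {UW : {set 'I_p} * {set 'I_p} | admissible UW}.

Definition U_of (x : server) := (val x).1.
Definition W_of (x : server) := (val x).2.
Definition stores_sum (x : server) := #|W_of x| == d.+1.

Lemma serverP x : [/\ #|U_of x| = (2 * d)%N, W_of x \subset U_of x &
  #|W_of x| = if stores_sum x then d.+1 else d].
Proof.
case: x => [[U W] adm]; rewrite /stores_sum /U_of /W_of /=.
case/and3P: adm => /eqP cardU sWU; rewrite mem_seq2 => /orP[] /eqP ->.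
  by rewrite (ltn_eqF (ltnSn d)).
by rewrite eqxx.
Qed.

Lemma server_eq x y : U_of x = U_of y -> W_of x = W_of y -> x = y.
Proof.
move=> eqU eqW; apply: val_inj.
by rewrite [val x]surjective_pairing [val y]surjective_pairing -/(U_of x) -/(W_of x) eqU eqW.
Qed.

Lemma card_server_gt0 : (d <= t)%N -> (0 < #|{: server}|)%N.
Proof.
move=> le_dt; apply/card_gt0P.
have adm : admissible ([set j : 'I_p | (j < 2 * d)%N], [set j : 'I_p | (j < d)%N]).
  apply/and3P; split => /=.
  - by rewrite card_ord_lt //; lia.
  - by apply/fintype.subsetP => j; rewrite !inE; lia.
  - by rewrite card_ord_lt ?mem_head //; lia.
by exists (exist admissible _ adm).
Qed.

Definition cells (x : server) : seq 'rV[F]_p :=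
  [seq delta_mx 0 j | j <- enum (~: W_of x)] ++
  (if stores_sum x then [:: \sum_(j in W_of x) delta_mx 0 j] else [::]).

Definition code (r : 'I_t) (x : server) : 'rV[F]_p := nth 0 (cells x) r.

Lemma size_cells x : size (cells x) = t.
Proof.
have [_ _ cardW] := serverP x.
rewrite /cells size_cat size_map -cardE.
have := cardsC (W_of x); rewrite card_ord cardW; set c := #|~: W_of x|.
by case: (stores_sum x) => /=; lia.
Qed.

Lemma in_span_cells (S : {set server}) x v :
  x \in S -> v \in cells x -> in_span code S v.
Proof.
move=> xS vx; have lt_vt : (index v (cells x) < t)%N.
  by have := index_mem v (cells x); rewrite vx size_cells.
by have := in_span_cell code (Ordinal lt_vt) xS; rewrite /code nth_index.
Qed.

Lemma unit_in_cells x j : j \notin W_of x -> delta_mx 0 j \in cells x.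
Proof. by move=> jW; rewrite mem_cat map_f // mem_enum inE. Qed.

Lemma sum_in_cells x : stores_sum x -> \sum_(j in W_of x) delta_mx 0 j \in cells x.
Proof. by move=> sx; rewrite mem_cat sx mem_head orbT. Qed.

Section Flip.
Variable i : 'I_p.

Lemma card_flip x : i \in W_of x ->
  #|U_of x :\: (W_of x :\ i)| = if stores_sum x then d else d.+1.
Proof.
move=> iW; have [cardU sWU cardW] := serverP x.
rewrite cardsD (finset.setIidPr (fintype.subset_trans (subsetDl _ _) sWU)) cardU.
by have := cardsD1 i (W_of x); rewrite iW cardW; set c := #|W_of x :\ i|; case: (stores_sum x); lia.
Qed.

Definition flip (x : server) : server := insubd x (U_of x, U_of x :\: (W_of x :\ i)).

Lemma flip_val x : i \in W_of x -> val (flip x) = (U_of x, U_of x :\: (W_of x :\ i)).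
Proof.
move=> iW; rewrite insubdK //; have [cardU _ _] := serverP x.
apply/and3P; split => /=; [by rewrite cardU | exact: subsetDl |].
by rewrite card_flip // mem_seq2; case: (stores_sum x); rewrite eqxx ?orbT.
Qed.

Lemma flip_U x : i \in W_of x -> U_of (flip x) = U_of x.
Proof. by move=> iW; rewrite /U_of flip_val. Qed.

Lemma flip_W x : i \in W_of x -> W_of (flip x) = U_of x :\: (W_of x :\ i).
Proof. by move=> iW; rewrite /W_of flip_val. Qed.

Lemma mem_flip x : i \in W_of x -> i \in W_of (flip x).
Proof.
move=> iW; have [_ sWU _] := serverP x.
by rewrite flip_W // !inE eqxx (fintype.subsetP sWU).
Qed.

Lemma stores_sum_flip x : i \in W_of x -> stores_sum (flip x) = ~~ stores_sum x.
Proof.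
move=> iW; rewrite {1}/stores_sum flip_W // card_flip //.
by case: (stores_sum x); rewrite ?eqxx // (ltn_eqF (ltnSn d)).
Qed.

Lemma flipK : {in [pred x | i \in W_of x], involutive flip}.
Proof.
move=> x; rewrite inE => iW; have [_ sWU _] := serverP x.
apply: server_eq; first by rewrite !flip_U ?mem_flip.
rewrite flip_W ?mem_flip // flip_U // flip_W //; apply/setP => j; rewrite !inE.
case: (eqVneq j i) => [-> | _] /=; first by rewrite iW (fintype.subsetP sWU).
by case: (boolP (j \in W_of x)) => [jW | _] /=; [rewrite (fintype.subsetP sWU) | rewrite andNb].
Qed.

Lemma flip_inj : {in [pred x | i \in W_of x] &, injective flip}.
Proof. exact: can_in_inj flipK. Qed.

End Flip.

Definition relabel (s : {perm 'I_p}) (x : server) : server :=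
  insubd x (s @: U_of x, s @: W_of x).

Lemma relabel_val s x : val (relabel s x) = (s @: U_of x, s @: W_of x).
Proof.
rewrite insubdK //; have [cardU sWU cardW] := serverP x.
apply/and3P; split => /=; rewrite ?card_imset ?cardU ?imsetS //; try exact: perm_inj.
by rewrite cardW mem_seq2; case: (stores_sum x); rewrite eqxx ?orbT.
Qed.

Lemma relabel_inj s : injective (relabel s).
Proof.
move=> x y /(congr1 val); rewrite !relabel_val => -[/imset_inj eqU /imset_inj eqW].
by apply: server_eq; [apply: eqU | apply: eqW]; exact: perm_inj.
Qed.

Lemma stores_sum_relabel s x : stores_sum (relabel s x) = stores_sum x.
Proof. by rewrite /stores_sum /W_of relabel_val card_imset //; exact: perm_inj. Qed.

Definition load (b : bool) (i : 'I_p) :=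
  #|[set x : server | (stores_sum x == b) && (i \in W_of x)]|.

Lemma load_relabel b (s : {perm 'I_p}) i : (load b i <= load b (s i))%N.
Proof.
rewrite /load -(card_imset _ (@relabel_inj s)); apply/subset_leq_card/fintype.subsetP => y.
case/imsetP => x; rewrite !inE => /andP[sx iW] ->; rewrite stores_sum_relabel sx.
by rewrite /W_of relabel_val mem_imset //; exact: perm_inj.
Qed.

Lemma load_const b i i' : load b i = load b i'.
Proof.
have le_load j j' : (load b j <= load b j')%N by rewrite -(tpermL j j') load_relabel.
by apply/anti_leq; rewrite !le_load.
Qed.

Lemma load_flip b i : (load b i <= load (~~ b) i)%N.
Proof.
have flip_inj_load : {in [set x | (stores_sum x == b) && (i \in W_of x)] &, injective (flip i)}.
  by apply: sub_in2 (@flip_inj i) => x; rewrite !inE => /andP[].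
rewrite /load -(card_in_imset flip_inj_load); apply/subset_leq_card/fintype.subsetP => y.
case/imsetP => x; rewrite !inE => /andP[/eqP <- iW] ->.
by rewrite stores_sum_flip // eqxx mem_flip.
Qed.

Lemma load_negb b i : load (~~ b) i = load b i.
Proof. by apply/eqP; rewrite eqn_leq load_flip -{2}[b]negbK load_flip. Qed.

Lemma sum_load b : (\sum_i load b i =
  #|[set x : server | stores_sum x == b]| * (if b then d.+1 else d))%N.
Proof.
under eq_bigr => i _ do rewrite /load -sum1_card big_mkcond /=.
rewrite exchange_big /= -sum_nat_const [RHS]big_mkcond /=; apply: eq_bigr => x _.
rewrite inE; case: (eqVneq (stores_sum x) b) => [<- | sxb] /=.
  have [_ _ <-] := serverP x; rewrite -sum1_card [RHS]big_mkcond /=.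
  by apply: eq_bigr => i _; rewrite !inE eqxx.
by rewrite big1 // => i _; rewrite !inE (negbTE sxb).
Qed.

Lemma card_server_mul i :
  (#|{: server}| * (d * d.+1) = p * load true i * (2 * d).+1)%N.
Proof.
have loadE b : (p * load true i =
    #|[set x : server | stores_sum x == b]| * (if b then d.+1 else d))%N.
  rewrite -sum_load (eq_bigr (fun _ => load true i)) ?sum_nat_const ?card_ord // => j _.
  by case: b; rewrite (load_const _ j i) //; apply: load_negb true i.
have partition : (#|[set x : server | stores_sum x == false]| +
                  #|[set x : server | stores_sum x == true]| = #|{: server}|)%N.
  rewrite -(cardsC [set x : server | stores_sum x == true]) addnC.
  by congr (_ + _); apply: eq_card => x; rewrite !inE; case: (stores_sum x).
have cardA := loadE false; have cardB := loadE true; rewrite -partition mulnDl.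
rewrite mulnA -cardA mulnCA -cardB [(d * _)%N]mulnC -mulnDr; congr (_ * _); lia.
Qed.

Section Recovery.
Variable i : 'I_p.

Definition recovery_servers := [set x : server | ~~ (stores_sum x && (i \in W_of x))].

Definition recovery_set (x : server) : {set server} :=
  if i \in W_of x then [set x; flip i x] else [set x].

Lemma card_recovery_servers : #|recovery_servers| = (#|{: server}| - load true i)%N.
Proof.
rewrite -(cardsC [set x : server | (stores_sum x == true) && (i \in W_of x)]) addKn.
by apply: eq_card => x; rewrite !inE eqb_id.
Qed.

Lemma flip_notin_recovery x : x \in recovery_servers -> i \in W_of x ->
  flip i x \notin recovery_servers.
Proof.
rewrite !inE => x_rec iW; rewrite mem_flip // stores_sum_flip // andbT negbK.
by move: x_rec; rewrite iW andbT.
Qed.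

Lemma in_recovery_set x z :
  (z \in recovery_set x) = (z == x) || (i \in W_of x) && (z == flip i x).
Proof. by rewrite /recovery_set; case: ifP; rewrite !inE ?orbF. Qed.

Lemma recovery_set_disjoint :
  {in recovery_servers &, forall x y, x != y -> [disjoint recovery_set x & recovery_set y]}.
Proof.
move=> x y x_rec y_rec neq_xy; apply/pred0P => z /=; rewrite !in_recovery_set.
apply/negP => /andP[/orP[/eqP zx | /andP[iWx /eqP zx]] /orP[/eqP zy | /andP[iWy /eqP zy]]].
- by rewrite -zx zy eqxx in neq_xy.
- by move: (flip_notin_recovery y_rec iWy); rewrite -zy zx x_rec.
- by move: (flip_notin_recovery x_rec iWx); rewrite -zx zy y_rec.
- by move: neq_xy; rewrite (flip_inj iWx iWy (etrans (esym zx) zy)) eqxx.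
Qed.

Lemma recovery_set_span :
  {in recovery_servers, forall x, in_span code (recovery_set x) (delta_mx 0 i)}.
Proof.
move=> x x_rec; rewrite /recovery_set; case: ifP => iWx; last first.
  by apply: (in_span_cells (x := x)); rewrite ?inE ?unit_in_cells ?iWx.
have sum_flip : stores_sum (flip i x) by rewrite stores_sum_flip //; move: x_rec; rewrite inE iWx andbT.
have -> : delta_mx 0 i =
    \sum_(j in W_of (flip i x)) delta_mx 0 j - \sum_(j in W_of (flip i x) | j != i) delta_mx 0 j :> 'rV[F]_p.
  by rewrite (bigD1 i) ?mem_flip //= addrK.
apply: in_spanB; first by apply: (in_span_cells (x := flip i x)); rewrite ?sum_in_cells // !inE eqxx orbT.
apply: in_span_sum => j /andP[]; rewrite flip_W // !inE => /andP[+ _] neq_ji.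
rewrite neq_ji /= => jW; apply: (in_span_cells (x := x)); last exact: unit_in_cells.
by rewrite !inE eqxx.
Qed.

End Recovery.

Lemma kPIR_construction : (0 < d)%N -> (d <= t)%N ->
  exists (m k : nat) (C : array_code F t m p),
    [/\ (0 < m)%N, is_kPIR C k & (k * (2 * d).+1 * p = m * (t * (2 * d).+1 + d ^ 2))%N].
Proof.
move=> d_gt0 le_dt; have i0 : 'I_p by exists 0%N; lia.
set m := #|{: server}|; set K := load true i0.
exists m, (m - K)%N, (fun r c => code r (enum_val c)); split.
- exact: card_server_gt0.
- apply: kPIR_of_recovery_sets => i.
  exists (recovery_servers i), (recovery_set i); split.
  + by rewrite card_recovery_servers (load_const _ i i0).
  + exact: recovery_set_disjoint.
  + exact: recovery_set_span.
- have := card_server_mul i0; rewrite -/m -/K => count.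
  have -> : (t * (2 * d).+1 + d ^ 2 = (2 * d).+1 * p - d * d.+1)%N by nia.
  by rewrite mulnBr count !mulnBl; lia.
Qed.

End Construction.

Section UnitRows.
Variables (F : fieldType) (p : nat).

Definition unit_rows (B : {set 'I_p}) : 'M[F]_(#|B|, p) :=
  \matrix_(k < #|B|) delta_mx 0 (enum_val k).

Lemma unit_rows_free B : row_free (unit_rows B).
Proof.
apply/row_freeP; exists (unit_rows B)^T; apply/matrixP => k l.
rewrite !mxE (bigD1 (enum_val k)) //= big1 ?addr0 => [|j neq_jk]; rewrite !mxE.
  by rewrite !eqxx mul1r (inj_eq enum_val_inj) eq_sym.
by rewrite (negbTE neq_jk) mul0r.
Qed.

Lemma unit_rows_sub n (M : 'M[F]_(n, p)) (B : {set 'I_p}) :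
  {in B, forall j, (('e_j : 'rV[F]_p) <= M)%MS} -> (unit_rows B <= M)%MS.
Proof. by move=> BM; apply/row_subP => k; rewrite rowK BM // enum_valP. Qed.

Lemma unit_rows_coord0 (B : {set 'I_p}) (v : 'rV[F]_p) j :
  (v <= unit_rows B)%MS -> j \notin B -> v 0 j = 0.
Proof.
case/submxP=> w -> jB; rewrite !mxE big1 // => k _; rewrite !mxE.
have /negbTE -> : j != enum_val k by apply: contraNneq jB => ->; apply: enum_valP.
by rewrite andbF mulr0.
Qed.

Lemma card_le_rank n (M : 'M[F]_(n, p)) (B : {set 'I_p}) :
  {in B, forall j, (('e_j : 'rV[F]_p) <= M)%MS} -> (#|B| <= \rank M)%N.
Proof. by move/unit_rows_sub/mxrankS; have /eqP -> := unit_rows_free B. Qed.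

Lemma card_lt_rank n (M : 'M[F]_(n, p)) (B : {set 'I_p}) (v : 'rV[F]_p) j :
  {in B, forall j, (('e_j : 'rV[F]_p) <= M)%MS} -> (v <= M)%MS -> j \notin B -> v 0 j != 0 ->
  (#|B| < \rank M)%N.
Proof.
move=> BM vM jB vj; have /eqP <- := unit_rows_free B; apply: rank_ltmx.
rewrite ltmxE unit_rows_sub //=; apply: contra vj => /(submx_trans vM) vB.
by rewrite (unit_rows_coord0 vB jB).
Qed.

End UnitRows.

Lemma sum_nat_if (I : finType) (B : {set I}) (a w : nat) :
  (\sum_i (if i \in B then a else w) = #|B| * a + #|~: B| * w)%N.
Proof.
rewrite (bigID (mem B)) /= -!sum_nat_const.
by congr (_ + _); [apply: eq_bigr => i -> | apply: eq_big => [i | i /negbTE ->]]; rewrite ?inE.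
Qed.

Section ServerWeight.
Variables (F : finFieldType) (t m p d : nat) (C : array_code F t m p).

Definition server_mx c : 'M[F]_(t, p) := \matrix_r C r c.

Definition stores c i := (('e_i : 'rV[F]_p) <= server_mx c)%MS.

Definition supp_stored c := [forall r, forall j, (C r c 0 j != 0) ==> stores c j].

Definition weight c i : nat :=
  if stores c i then (2 * d).+1 else if supp_stored c then d else d.+1.

Lemma cell_sub r c : (C r c <= server_mx c)%MS.
Proof. by have := row_sub r (server_mx c); rewrite rowK. Qed.

Lemma recovery_weight S i :
  in_span_cols C S i -> ((2 * d).+1 <= \sum_(c in S) weight c i)%N.
Proof.
case=> a span_i.
have [/existsP[c /andP[cS ci]] | /existsPn unstored] :=
  boolP [exists c, (c \in S) && stores c i].
  by rewrite (bigD1 c) //= /weight ci leq_addr.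
have {}unstored c : c \in S -> ~~ stores c i by move=> cS; move: (unstored c); rewrite cS.
have [/forall_inP pure | /forall_inPn[c0 c0S impure]] :=
  boolP [forall (c | c \in S), supp_stored c].
  suff coord0 : (\sum_(r < t) \sum_(c in S) a r c *: C r c) 0 i = 0.
    by move/matrixP/(_ 0 i): span_i; rewrite coord0 mxE !eqxx => /eqP; rewrite eq_sym oner_eq0.
  rewrite summxE big1 // => r _; rewrite summxE big1 // => c cS.
  have /forallP/(_ r)/forallP/(_ i) := pure c cS.
  by rewrite (negbTE (unstored c cS)) implybF negbK mxE => /eqP ->; rewrite mulr0.
have [S_c0 | /subsetPn[c1 c1S]] := boolP (S \subset [set c0]).
  case/negP: (unstored c0 c0S); rewrite /stores -span_i.
  apply: summx_sub => r _; apply: summx_sub => c /(fintype.subsetP S_c0).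
  by rewrite inE => /eqP ->; apply/scalemx_sub/cell_sub.
rewrite inE => neq_c10; rewrite (bigD1 c0) //= (bigD1 c1) /=; last by rewrite c1S.
rewrite addnA /weight (negbTE (unstored c0 c0S)) (negbTE impure) (negbTE (unstored c1 c1S)).
by case: (supp_stored c1); lia.
Qed.

Lemma kPIR_weight k i : is_kPIR C k -> (k * (2 * d).+1 <= \sum_c weight c i)%N.
Proof.
case/(_ i)=> S [disj spans].
have disjS j j' : j != j' -> [disjoint S j & S j'] by move/disj; rewrite setI_eq0.
apply: (@leq_trans (\sum_j \sum_(c in S j) weight c i)).
  rewrite -[k in (k * _)%N]card_ord -sum_nat_const.
  by apply: leq_sum => j _; apply: recovery_weight.
rewrite -(partition_disjoint_bigcup _ _ disjS).
by rewrite [X in (_ <= X)%N](bigID (mem (\bigcup_j S j))) /= leq_addr.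
Qed.

End ServerWeight.

Lemma server_weight (F : finFieldType) t m d (C : array_code F t m (t + d)) c :
  (\sum_i weight d C c i <= t * (2 * d).+1 + d ^ 2)%N.
Proof.
pose B := [set i | stores C c i].
have stored_B : {in B, forall j, (('e_j : 'rV[F]_(t + d)) <= server_mx C c)%MS}.
  by move=> j; rewrite inE.
have rank_le_t := rank_leq_row (server_mx C c).
have cardB := cardsC B; rewrite card_ord in cardB.
rewrite (eq_bigr (fun i => if i \in B then (2 * d).+1 else
                           if supp_stored C c then d else d.+1)); last first.
  by move=> i _; rewrite inE.
rewrite sum_nat_if; move: cardB; set b := #|B|; set b' := #|~: B| => cardB.
case: (boolP (supp_stored C c)) => [_ | /forallPn[r /forallPn[j]]].
  by have := card_le_rank stored_B; rewrite -/b; nia.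
rewrite negb_imply => /andP[nz unstored_j]; have jB : j \notin B by rewrite inE.
by have := card_lt_rank stored_B (cell_sub C r c) jB nz; rewrite -/b; nia.
Qed.

Lemma kPIR_rate_bound (F : finFieldType) t m d (C : array_code F t m (t + d)) k :
  is_kPIR C k -> (k * (2 * d).+1 * (t + d) <= m * (t * (2 * d).+1 + d ^ 2))%N.
Proof.
move=> kPIR_C; apply: (@leq_trans (\sum_i \sum_c weight d C c i)).
  rewrite mulnC -[in X in (X * _)%N](card_ord (t + d)) -sum_nat_const.
  by apply: leq_sum => i _; apply: kPIR_weight.
rewrite exchange_big -[in X in (_ <= X * _)%N](card_ord m) -sum_nat_const.
by apply: leq_sum => c _; apply: server_weight.
Qed.

Local Open Scope classical_set_scope.

Lemma sup_eq_ub_adherent (R : realType) (E : set R) l :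
  ubound E l -> (forall e, 0 < e -> exists2 v, E v & l - e < v) -> sup E = l.
Proof.
move=> ub_l adh_l; have [v Ev _] := adh_l 1 ltr01.
apply/eqP; rewrite eq_le; apply/andP; split; first by apply: ge_sup => //; exists v.
rewrite leNgt; apply/negP => lt_sup_l.
have [|w Ew] := adh_l (l - sup E); first by rewrite subr_gt0.
by rewrite subKr; apply/negP; rewrite -leNgt; apply: ub_le_sup => //; exists l.
Qed.

Lemma nat_ratio_le (R : numFieldType) (k m a b : nat) : (0 < m)%N -> (0 < b)%N ->
  (k * b <= a * m)%N -> k%:R / m%:R <= a%:R / b%:R :> R.
Proof.
move=> m_gt0 b_gt0 le_kb_am.
by rewrite ler_pdivrMr ?ltr0n // mulrAC ler_pdivlMr ?ltr0n // -!natrM ler_nat.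
Qed.

Lemma nat_ratio_eq (R : numFieldType) (k m a b : nat) : (0 < m)%N -> (0 < b)%N ->
  (k * b = a * m)%N -> k%:R / m%:R = a%:R / b%:R :> R.
Proof.
move=> m_gt0 b_gt0 eq_kb_am; apply/eqP.
by rewrite eqr_div ?pnatr_eq0 -?lt0n // -!natrM eq_kb_am mulnC.
Qed.

Lemma rat_nat_frac (s : rat) : 0 <= s -> exists num den : nat, (0 < den)%N /\ num%:Q = s * den%:Q.
Proof.
move=> s_ge0; exists `|numq s|%N, `|denq s|%N; split; first by rewrite absz_gt0 denq_neq0.
rewrite gez0_abs ?numq_ge0 // absz_denq.
by rewrite -{2}(divq_num_den s) divfK // intr_eq0 denq_neq0.
Qed.

Section FixedRatio.
Variable R : realType.

Definition opt_rate (t d : nat) : R :=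
  1 - (d%:R ^+ 2 + d%:R) / ((t%:R + d%:R) * (2 * d%:R + 1)).

Lemma opt_rate_nat t d : (0 < d)%N ->
  opt_rate t d = (t * (2 * d).+1 + d ^ 2)%:R / ((2 * d).+1 * (t + d))%:R.
Proof.
move=> d_gt0; have d_pos : 0 < d%:R :> R by rewrite ltr0n.
have t_ge0 : 0 <= t%:R :> R by rewrite ler0n.
rewrite /opt_rate -[(2 * d).+1]addn1 !(natrD, natrM, natrX); field; lra.
Qed.

Lemma opt_rate_split t d : (0 < d)%N ->
  opt_rate t d = t%:R / (t%:R + d%:R) + d%:R ^+ 2 / ((t%:R + d%:R) * (2 * d%:R + 1)).
Proof.
move=> d_gt0; have d_pos : 0 < d%:R :> R by rewrite ltr0n.
have t_ge0 : 0 <= t%:R :> R by rewrite ler0n.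
rewrite /opt_rate; field; lra.
Qed.

Lemma opt_rate_ratio t d : (0 < t)%N -> (0 < d)%N -> let s := 1 + d%:Q / t%:Q in
  opt_rate t d = (ratr s + 1 + 1 / d%:R) / ((2 + 1 / d%:R) * ratr s).
Proof.
move=> t_gt0 d_gt0 s; have d_pos : 0 < d%:R :> R by rewrite ltr0n.
have t_pos : 0 < t%:R :> R by rewrite ltr0n.
have -> : ratr s = 1 + d%:R / t%:R :> R.
  by rewrite /s rmorphD rmorph1 fmorph_div !rmorph_int.
rewrite /opt_rate; field; lra.
Qed.

Lemma nat_of_ratio_eq (t d p : nat) : (0 < t)%N -> p%:Q = (1 + d%:Q / t%:Q) * t%:Q -> p = (t + d)%N.
Proof.
move=> t_gt0; rewrite mulrDl mul1r divfK ?pnatr_eq0 -?lt0n // -natrD.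
by move/eqP; rewrite eqr_nat => /eqP.
Qed.

Lemma opt_rate_in_rates t d : (0 < d)%N -> (d <= t)%N ->
  rates_st R (1 + d%:Q / t%:Q) t (opt_rate t d).
Proof.
move=> d_gt0 le_dt; exists (t + d)%N; split.
  have t_neq0 : t%:Q != 0 by rewrite pnatr_eq0 -lt0n; lia.
  by rewrite mulrDl mul1r divfK // PoszD intrD.
have [m [k [C [m_gt0 kPIR_C count]]]] := kPIR_construction 'F_2 d_gt0 le_dt.
exists 'F_2, m, k, C; split => //; split => //.
rewrite opt_rate_nat //; apply/esym/nat_ratio_eq => //; first by rewrite muln_gt0; lia.
by rewrite mulnA count mulnC.
Qed.

Lemma rates_le_opt_rate t d r : (0 < t)%N -> (0 < d)%N ->
  rates_st R (1 + d%:Q / t%:Q) t r -> r <= opt_rate t d.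
Proof.
move=> t_gt0 d_gt0 [p [/(nat_of_ratio_eq t_gt0) -> [F [m [k [C [m_gt0 [kPIR_C ->]]]]]]]].
rewrite opt_rate_nat // nat_ratio_le //; first by rewrite muln_gt0; lia.
by rewrite mulnA [X in (_ <= X)%N]mulnC; apply: kPIR_rate_bound.
Qed.

Lemma g_st_opt_rate t d : (0 < d)%N -> (d <= t)%N ->
  g_st R (1 + d%:Q / t%:Q) t = opt_rate t d.
Proof.
move=> d_gt0 le_dt; have t_gt0 : (0 < t)%N by lia.
apply: sup_eq_ub_adherent => [r | e e_gt0]; first exact: rates_le_opt_rate.
by exists (opt_rate t d); [apply: opt_rate_in_rates | rewrite ltrBlDr ltrDl].
Qed.

End FixedRatio.

Section RateGap.
Variable R : realType.

Definition rate_gap (S x : R) := (S - 1) / (2 * S * (2 * x + 1)).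

Lemma ratio_rate_gap (S x : R) : 1 < S -> 0 < x ->
  (S + 1 + 1 / x) / ((2 + 1 / x) * S) = (S + 1) / (2 * S) - rate_gap S x.
Proof. by move=> S_gt1 x_gt0; rewrite /rate_gap; field; lra. Qed.

Lemma rate_gap_ge0 (S x : R) : 1 < S -> 0 <= x -> 0 <= rate_gap S x.
Proof. by move=> S_gt1 x_ge0; rewrite /rate_gap divr_ge0 //; nra. Qed.

Lemma rate_gap_lt (S x e : R) : 1 < S -> 0 < e -> 1 < e * x -> rate_gap S x < e.
Proof.
move=> S_gt1 e_gt0 ex_gt1; have x_gt0 : 0 < x by nra.
by rewrite /rate_gap ltr_pdivrMr; nra.
Qed.

End RateGap.

Section RatioLimit.
Variables (R : realType) (s : rat).
Hypotheses (s_gt1 : 1 < s) (s_le2 : s <= 2).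

Local Notation S := (ratr s : R).

Lemma ratr_gt1 : 1 < S.
Proof. by rewrite -(rmorph1 (ratr : rat -> R)) ltr_rat. Qed.

Lemma g_st_gap (t p : nat) : (0 < t)%N -> p%:Q = s * t%:Q ->
  (t < p)%N /\ g_st R s t = (S + 1) / (2 * S) - rate_gap S (p - t)%:R.
Proof.
move=> t_gt0 p_st; have t_pos : 0 < t%:Q by rewrite ltr0n.
have lt_tp : (t < p)%N by rewrite -ltz_nat -(ltr_int rat) p_st -[X in X < _]mul1r ltr_pM2r.
have le_pt : (p <= 2 * t)%N by rewrite -lez_nat -(ler_int rat) p_st PoszM intrM ler_pM2r.
have s_eq : s = 1 + (p - t)%N%:Q / t%:Q.
  apply: (mulIf (lt0r_neq0 t_pos)); rewrite -p_st mulrDl mul1r divfK ?lt0r_neq0 //.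
  by rewrite -natrD subnKC // ltnW.
have d_gt0 : (0 < p - t)%N by rewrite subn_gt0.
split => //; rewrite [in LHS]s_eq g_st_opt_rate ?opt_rate_ratio -?s_eq //; last by lia.
by rewrite ratio_rate_gap ?ratr_gt1 ?ltr0n.
Qed.

Lemma sup_tail N :
  sup [set v | exists t : nat, [/\ (N <= t)%N, (0 < t)%N,
         (exists p : nat, p%:Q = s * t%:Q) & v = g_st R s t]] = (S + 1) / (2 * S).
Proof.
apply: sup_eq_ub_adherent => [v [t [_ t_gt0 [p p_st] ->]] | e e_gt0].
  have [_ ->] := g_st_gap t_gt0 p_st.
  by rewrite lerBlDr lerDl rate_gap_ge0 ?ratr_gt1.
(* Along t = n * den, s t is integral and the index d = n (num - den) >= n is unbounded. *)
have [num [den [den_gt0 num_st]]] := rat_nat_frac (ltW (lt_trans ltr01 s_gt1)).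
have e_inv_lt := archi_boundP (ltW (divr_gt0 ltr01 e_gt0)).
set a := Num.Def.archi_bound (1 / e) in e_inv_lt; pose n := (N + a).+1.
have t_gt0 : (0 < n * den)%N by rewrite muln_gt0.
have p_st : (n * num)%N%:Q = s * (n * den)%N%:Q by rewrite !PoszM !intrM num_st mulrCA.
have [lt_tp gE] := g_st_gap t_gt0 p_st.
exists (g_st R s (n * den)); first by exists (n * den)%N; split => //; [nia | exists (n * num)%N].
rewrite gE ltrD2l ltrN2 rate_gap_lt ?ratr_gt1 //.
have le_ad : (a <= n * num - n * den)%N by rewrite -mulnBr; nia.
have := ler_nat R a (n * num - n * den); rewrite le_ad => /(lt_le_trans e_inv_lt).
by rewrite ltr_pdivrMr // mulrC.
Qed.

Lemma g_s_ratio : g_s R s = (S + 1) / (2 * S).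
Proof.
rewrite /g_s -[RHS]inf1; congr inf; apply/seteqP; split => u /=.
  by case=> N ->; apply: sup_tail.
by move=> ->; exists 0%N; rewrite sup_tail.
Qed.

End RatioLimit.

Lemma opt_rate_diag (R : realType) t : (0 < t)%N ->
  opt_rate R t t = (3 * t%:R + 1) / (4 * t%:R + 2).
Proof.
move=> t_gt0; have t_pos : 0 < t%:R :> R by rewrite ltr0n.
by rewrite /opt_rate; field; lra.
Qed.

Lemma ratio_diag t : (0 < t)%N -> 1 + t%:Q / t%:Q = 2.
Proof. by move=> t_gt0; rewrite divff // pnatr_eq0 -lt0n. Qed.

Theorem corollary3 (R : realType) :
  (* (i) *)
  (forall t d : nat, (1 <= d)%N -> (d <= t)%N ->
     let s : rat := 1 + d%:Q / t%:Q in
     let v : R := 1 - (d%:R ^+ 2 + d%:R) / ((t%:R + d%:R) * (2 * d%:R + 1)) in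
     [/\ rates_st R s t v,
         (forall r, rates_st R s t r -> r <= v),
         g_st R s t = v,
         v = t%:R / (t%:R + d%:R) + d%:R ^+ 2 / ((t%:R + d%:R) * (2 * d%:R + 1))
       & v = (ratr s + 1 + 1 / d%:R) / ((2 + 1 / d%:R) * ratr s)]) /\
  (* (ii) *)
  (forall s : rat, 1 < s -> s <= 2 ->
     g_s R s = (ratr s + 1) / (2 * ratr s)) /\
  (* (iii) *)
  (forall t : nat, (0 < t)%N ->
     let v : R := (3 * t%:R + 1) / (4 * t%:R + 2) in
     [/\ rates_st R 2 t v, (forall r, rates_st R 2 t r -> r <= v) & g_st R 2 t = v]).
Proof.
split; [|split].
- move=> t d d_gt0 le_dt s v; have t_gt0 : (0 < t)%N by lia.
  split; first exact: opt_rate_in_rates.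
  + by move=> r; apply: rates_le_opt_rate.
  + exact: g_st_opt_rate.
  + exact: opt_rate_split.
  + exact: opt_rate_ratio.
- by move=> s s_gt1 s_le2; apply: g_s_ratio.
- move=> t t_gt0 v; rewrite /v -opt_rate_diag // -(ratio_diag t_gt0).
  split; first exact: opt_rate_in_rates.
  + by move=> r; apply: rates_le_opt_rate.
  + exact: g_st_opt_rate.
Qed.
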